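(* Let $r\ge 1$, let $\sigma_1\ge\sigma_2\ge\cdots\ge\sigma_r>0$ be real numbers and $c_1,\ldots,c_r\in\mathbb{C}$, and define the rational function $$\psi(\nu)=\sum_{i=1}^r \frac{|c_i|^2}{(\sigma_i^2+\nu)^2}=\sum_{i=1}^r \frac{|c_i|^2}{(\delta_i-\nu)^2},\qquad \delta_i=-\sigma_i^2,$$ so that $\delta_1\le\cdots\le\delta_r<0$. Assume that the poles of $\psi$ are not all identical, i.e. there exist indices $i,j$ with $c_i\neq 0$, $c_j\neq 0$ and $\delta_i\neq\delta_j$. Let $\nu^{(l)}\ge 0$ and define $$\alpha=\frac{4\big(\psi(\nu^{(l)})\big)^3}{\big(\psi'(\nu^{(l)})\big)^2},\qquad \beta=\nu^{(l)}+\frac{2\psi(\nu^{(l)})}{\psi'(\nu^{(l)})},\qquad F(\nu;\alpha,\beta)=\frac{\alpha}{(\beta-\nu)^2},$$ so that $F(\nu^{(l)};\alpha,\beta)=\psi(\nu^{(l)})$ and $F'(\nu^{(l)};\alpha,\beta)=\psi'(\nu^{(l)})$. Then $F(\nu;\alpha,\beta)<\psi(\nu)$ for all real $\nu>\delta_r$ with $\nu\neq\nu^{(l)}$.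
   Context: $\psi'$ denotes the derivative of $\psi$ with respect to the real variable $\nu$. In the paper, $\nu^{(l)}$ is the current iterate of an iterative root-finding method for $\psi(\nu)=1$ on $[0,\infty)$, hence $\nu^{(l)}\ge 0$. *)

From Stdlib Require Import Reals.
From Coquelicot Require Import Coquelicot.
Open Scope R_scope.

(* Indices are 0-based: i = 0, ..., r-1 correspond to the paper's 1, ..., r.
   psi r sigma c nu = sum_{i<r} |c_i|^2 / (sigma_i^2 + nu)^2 *)
Definition psi (r : nat) (sigma : nat -> R) (c : nat -> C) (nu : R) : R :=
  sum_n (fun i => (Cmod (c i)) ^ 2 / (sigma i ^ 2 + nu) ^ 2) (r - 1)%nat.

Definition delta (sigma : nat -> R) (i : nat) : R := - (sigma i ^ 2).

Definition F (alpha beta nu : R) : R := alpha / (beta - nu) ^ 2.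

(* Write y_k = sigma_k^2 + nu, z_k = sigma_k^2 + nu^(l), a_k = |c_k|^2, P = psi(nu^(l)) and
   Q = -psi'(nu^(l))/2.  The tangent model simplifies to F(nu) = P^3 / B^2 with
   B = P + Q (nu - nu^(l)) = sum_k a_k y_k / z_k^3, so the claim is the Hoelder-type inequality
   (sum_k a_k / z_k^2)^3 < (sum_k a_k / y_k^2) (sum_k a_k y_k / z_k^3)^2.  It follows by summing
   AM-GM for the three numbers l^2/y_k^2, y_k/(l z_k^3), y_k/(l z_k^3), whose product is 1/z_k^6,
   with l = B/P.  Equality would force y_k = l z_k on the support of a, i.e. either nu = nu^(l)
   or all active poles coincide. *)
From Stdlib Require Import Reals Lra Lia.
From Coquelicot Require Import Coquelicot.
Open Scope R_scope.

Lemma sum_f_R0_lt (f g : nat -> R) (N : nat) :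
  (forall k, (k <= N)%nat -> f k <= g k) ->
  (exists k, (k <= N)%nat /\ f k < g k) ->
  sum_f_R0 f N < sum_f_R0 g N.
Proof.
  induction N as [|N IH]; intros Hle [k [Hk Hlt]]; simpl.
  - replace k with 0%nat in Hlt by lia. exact Hlt.
  - destruct (Nat.eq_dec k (S N)) as [->|Hk'].
    + assert (sum_f_R0 f N <= sum_f_R0 g N) by (apply sum_Rle; intros; apply Hle; lia).
      lra.
    + assert (sum_f_R0 f N < sum_f_R0 g N).
      { apply IH; [intros; apply Hle; lia | exists k; split; [lia | exact Hlt]]. }
      assert (f (S N) <= g (S N)) by (apply Hle; lia).
      lra.
Qed.

Lemma sum_f_R0_pos (f : nat -> R) (N : nat) :
  (forall k, (k <= N)%nat -> 0 <= f k) ->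
  (exists k, (k <= N)%nat /\ 0 < f k) ->
  0 < sum_f_R0 f N.
Proof.
  intros Hge Hgt. rewrite <- (Rmult_0_l (INR (S N))), <- sum_cte.
  exact (sum_f_R0_lt _ _ N Hge Hgt).
Qed.

Lemma amgm_tangent_gap (a y z l : R) : 0 < y -> 0 < z -> 0 < l ->
  a / y ^ 2 * l ^ 2 + a * y / z ^ 3 * (2 / l) - a / z ^ 2 * 3
  = a * (y - l * z) ^ 2 * (2 * y + l * z) / (l * z ^ 3 * y ^ 2).
Proof. intros Hy Hz Hl. field. lra. Qed.

Lemma amgm_tangent_le (a y z l : R) : 0 <= a -> 0 < y -> 0 < z -> 0 < l ->
  a / z ^ 2 * 3 <= a / y ^ 2 * l ^ 2 + a * y / z ^ 3 * (2 / l).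
Proof.
  intros Ha Hy Hz Hl.
  assert (0 <= a * (y - l * z) ^ 2 * (2 * y + l * z) / (l * z ^ 3 * y ^ 2)).
  { apply Rdiv_le_0_compat.
    - apply Rmult_le_pos; [apply Rmult_le_pos; [exact Ha | apply pow2_ge_0] | nra].
    - apply Rmult_lt_0_compat; [apply Rmult_lt_0_compat|]; try apply pow_lt; lra. }
  rewrite <- amgm_tangent_gap in H by assumption.
  lra.
Qed.

Lemma amgm_tangent_lt (a y z l : R) : 0 < a -> 0 < y -> 0 < z -> 0 < l -> y <> l * z ->
  a / z ^ 2 * 3 < a / y ^ 2 * l ^ 2 + a * y / z ^ 3 * (2 / l).
Proof.
  intros Ha Hy Hz Hl Hyz.
  assert (0 < a * (y - l * z) ^ 2 * (2 * y + l * z) / (l * z ^ 3 * y ^ 2)).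
  { apply Rdiv_lt_0_compat.
    - apply Rmult_lt_0_compat; [apply Rmult_lt_0_compat; [exact Ha | apply pow2_gt_0; lra] | nra].
    - apply Rmult_lt_0_compat; [apply Rmult_lt_0_compat|]; try apply pow_lt; lra. }
  rewrite <- amgm_tangent_gap in H by assumption.
  lra.
Qed.

Section HoelderCube.

Variables (N : nat) (a y z : nat -> R).
Hypotheses (a_ge0 : forall k, (k <= N)%nat -> 0 <= a k)
           (y_gt0 : forall k, (k <= N)%nat -> 0 < y k)
           (z_gt0 : forall k, (k <= N)%nat -> 0 < z k).

Lemma hoelder_cube_lt :
  (exists i j, (i <= N)%nat /\ (j <= N)%nat /\ 0 < a i /\ 0 < a j /\ y i * z j <> y j * z i) ->
  (sum_f_R0 (fun k => a k / z k ^ 2) N) ^ 3 / (sum_f_R0 (fun k => a k * y k / z k ^ 3) N) ^ 2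
  < sum_f_R0 (fun k => a k / y k ^ 2) N.
Proof.
  intros [i [j [Hi [Hj [Hai [Haj Hyz]]]]]].
  set (P := sum_f_R0 (fun k => a k / z k ^ 2) N).
  set (A := sum_f_R0 (fun k => a k / y k ^ 2) N).
  set (B := sum_f_R0 (fun k => a k * y k / z k ^ 3) N).
  assert (HP : 0 < P).
  { apply sum_f_R0_pos.
    - intros k Hk. apply Rdiv_le_0_compat; [apply a_ge0 | apply pow_lt, z_gt0]; assumption.
    - exists i. split; [exact Hi|]. apply Rdiv_lt_0_compat; [|apply pow_lt, z_gt0]; assumption. }
  assert (HB : 0 < B).
  { apply sum_f_R0_pos.
    - intros k Hk. apply Rdiv_le_0_compat; [|apply pow_lt, z_gt0; exact Hk].
      apply Rmult_le_pos; [apply a_ge0 | left; apply y_gt0]; exact Hk.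
    - exists i. split; [exact Hi|]. apply Rdiv_lt_0_compat; [|apply pow_lt, z_gt0; exact Hi].
      apply Rmult_lt_0_compat; [exact Hai | apply y_gt0, Hi]. }
  set (l := B / P).
  assert (Hl : 0 < l) by (apply Rdiv_lt_0_compat; assumption).
  assert (Hsum : 3 * P < l ^ 2 * A + 2 / l * B).
  { unfold P, A, B. rewrite !scal_sum, <- plus_sum.
    apply sum_f_R0_lt.
    - intros k Hk. apply amgm_tangent_le; auto.
    - (* equality at both i and j would give y_i z_j = l z_i z_j = y_j z_i *)
      destruct (Req_dec (y i) (l * z i)) as [Ei|Ei];
        [destruct (Req_dec (y j) (l * z j)) as [Ej|Ej] |].
      + exfalso. apply Hyz. rewrite Ei, Ej. ring.
      + exists j. split; [exact Hj|].
        apply amgm_tangent_lt; auto.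
      + exists i. split; [exact Hi|].
        apply amgm_tangent_lt; auto. }
  replace (l ^ 2 * A + 2 / l * B) with (B ^ 2 / P ^ 2 * A + 2 * P) in Hsum
    by (unfold l; field; lra).
  apply (Rmult_lt_reg_l (B ^ 2 / P ^ 2)).
  - apply Rdiv_lt_0_compat; apply pow_lt; assumption.
  - replace (B ^ 2 / P ^ 2 * (P ^ 3 / B ^ 2)) with P by (field; lra).
    lra.
Qed.

End HoelderCube.

Lemma F_tangent (p d x0 x : R) : d <> 0 ->
  F (4 * p ^ 3 / d ^ 2) (x0 + 2 * p / d) x = p ^ 3 / (p + d / 2 * (x0 - x)) ^ 2.
Proof.
  intros Hd. unfold F.
  replace (x0 + 2 * p / d - x) with (2 / d * (p + d / 2 * (x0 - x))) by (field; exact Hd).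
  destruct (Req_dec (p + d / 2 * (x0 - x)) 0) as [E|E].
  - rewrite E, Rmult_0_r, pow_i, !Rdiv_0_r by lia. reflexivity.
  - field. split; [contradict E; lra | exact Hd].
Qed.

Lemma psi_eq_sum (r : nat) (sigma : nat -> R) (c : nat -> C) (x : R) :
  psi r sigma c x = sum_f_R0 (fun k => Cmod (c k) ^ 2 / (sigma k ^ 2 + x) ^ 2) (r - 1).
Proof. apply sum_n_Reals. Qed.

Lemma is_derive_psi (r : nat) (sigma : nat -> R) (c : nat -> C) (x : R) :
  (forall k, (k <= r - 1)%nat -> sigma k ^ 2 + x <> 0) ->
  is_derive (psi r sigma c) x
    (-2 * sum_f_R0 (fun k => Cmod (c k) ^ 2 / (sigma k ^ 2 + x) ^ 3) (r - 1)).
Proof.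
  intros Hx. unfold psi. rewrite <- sum_n_Reals.
  rewrite <- (sum_n_mult_l (K := R_Ring)).
  apply (is_derive_sum_n (fun k y => Cmod (c k) ^ 2 / (sigma k ^ 2 + y) ^ 2)).
  intros k Hk.
  auto_derive.
  - intro Hzero. apply (Hx k Hk). simpl in Hzero. nra.
  - unfold mult; simpl. specialize (Hx k Hk). field. contradict Hx. nra.
Qed.

Lemma shifted_sq_pos (r : nat) (sigma : nat -> R) (x : R) :
  (forall i j : nat, (i <= j)%nat -> (j < r)%nat -> sigma j <= sigma i) ->
  (1 <= r)%nat -> 0 < sigma (r - 1)%nat -> delta sigma (r - 1)%nat < x ->
  forall k, (k <= r - 1)%nat -> 0 < sigma k ^ 2 + x.
Proof.
  unfold delta. intros Hsorted Hr Hlast Hx k Hk.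
  assert (sigma (r - 1)%nat <= sigma k) by (apply Hsorted; lia).
  nra.
Qed.

Theorem theorem1 (r : nat) (sigma : nat -> R) (c : nat -> C) (nul : R) :
  (1 <= r)%nat ->
  (forall i j : nat, (i <= j)%nat -> (j < r)%nat -> sigma j <= sigma i) ->
  0 < sigma (r - 1)%nat ->
  (exists i j : nat, (i < r)%nat /\ (j < r)%nat /\ c i <> 0%C /\ c j <> 0%C /\
                     delta sigma i <> delta sigma j) ->
  0 <= nul ->
  let alpha := 4 * (psi r sigma c nul) ^ 3 / (Derive (psi r sigma c) nul) ^ 2 in
  let beta := nul + 2 * psi r sigma c nul / Derive (psi r sigma c) nul in
  forall nu : R, delta sigma (r - 1)%nat < nu -> nu <> nul ->
    F alpha beta nu < psi r sigma c nu.
Proof.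
  intros Hr Hsorted Hlast [i [j [Hi [Hj [Hci [Hcj Hdelta]]]]]] Hnul alpha beta nu Hnu Hne.
  assert (Hcoef : forall k, c k <> 0%C -> 0 < Cmod (c k) ^ 2)
    by (intros k Hk; apply pow2_gt_0; contradict Hk; apply Cmod_eq_0, Hk).
  assert (Hz : forall k, (k <= r - 1)%nat -> 0 < sigma k ^ 2 + nul).
  { apply shifted_sq_pos; try assumption. unfold delta. nra. }
  assert (Hy := shifted_sq_pos r sigma nu Hsorted Hr Hlast Hnu).
  unfold delta in Hdelta.
  set (Q := sum_f_R0 (fun k => Cmod (c k) ^ 2 / (sigma k ^ 2 + nul) ^ 3) (r - 1)).
  assert (HQ : 0 < Q).
  { apply sum_f_R0_pos.
    - intros k Hk. apply Rdiv_le_0_compat; [apply pow2_ge_0 | apply pow_lt, Hz, Hk].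
    - exists i. split; [lia|]. apply Rdiv_lt_0_compat; [apply Hcoef, Hci | apply pow_lt, Hz; lia]. }
  assert (Hder : Derive (psi r sigma c) nul = -2 * Q).
  { apply is_derive_unique, is_derive_psi. intros k Hk. specialize (Hz k Hk). lra. }
  assert (HB : psi r sigma c nul + -2 * Q / 2 * (nul - nu)
             = sum_f_R0 (fun k => Cmod (c k) ^ 2 * (sigma k ^ 2 + nu) / (sigma k ^ 2 + nul) ^ 3)
                 (r - 1)).
  { rewrite psi_eq_sum.
    replace (-2 * Q / 2 * (nul - nu)) with ((nu - nul) * Q) by field.
    unfold Q. rewrite scal_sum, <- plus_sum.
    apply sum_eq. intros k Hk. specialize (Hz k Hk). field. lra. }
  unfold alpha, beta. rewrite Hder, F_tangent, HB, !psi_eq_sum by lra.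
  apply hoelder_cube_lt; intros; try apply pow2_ge_0; auto.
  exists i, j. repeat split; try lia; try apply Hcoef; auto.
  (* the two cross products differ by (sigma_i^2 - sigma_j^2) (nul - nu) *)
  intro E.
  destruct (Rmult_integral (sigma j ^ 2 - sigma i ^ 2) (nul - nu)) as [Eij|Eij]; lra.
Qed.
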